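(* For a finite-dimensional Lie algebra $L$ over a field $F$, the following are pairwise equivalent: 1. $L$ is primitive of type 1 or of type 3; 2. there is a minimal ideal $B$ of $L$ and a subalgebra $U$ of $L$ such that $U$ is a complement of $B$ in $L$ and $U$ is also a complement of $C_L(B)$ in $L$; 3. there is a minimal ideal $B$ of $L$ such that $L$ is isomorphic to the semidirect sum $B \ltimes L/C_L(B)$ (with $L/C_L(B)$ acting on $B$ via the induced adjoint action).
   Context: The core $U_L$ of a subalgebra $U$ is the largest ideal of $L$ contained in $U$; $L$ is primitive if it has a maximal subalgebra $U$ with $U_L = 0$. A primitive Lie algebra is of type 1 if it has a unique minimal ideal which is abelian; of type 2 if it has a unique minimal ideal which is non-abelian; of type 3 if it has precisely two distinct minimal ideals, each non-abelian. A subalgebra $U$ complements an ideal $A$ if $L = A + U$ and $A \cap U = 0$. $C_L(B) = \{x\in L : [x,B]=0\}$. *)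

(* Finite-dimensional Lie algebras over a field F are modelled
   as a finite-dimensional F-vector space  L : vectType F  together with a
   bracket  br : L -> L -> L  satisfying the Lie axioms. *)
From HB Require Import structures.
From mathcomp Require Import all_boot all_order all_algebra.
Set Implicit Arguments. Unset Strict Implicit. Unset Printing Implicit Defensive.
Import GRing.Theory.
Local Open Scope ring_scope.

Section LieDefs.
Variable F : fieldType.

Definition is_lie (V : vectType F) (br : V -> V -> V) : Prop :=
  [/\ (forall (a : F) (x y z : V), br (a *: x + y) z = a *: br x z + br y z),
      (forall (a : F) (x y z : V), br z (a *: x + y) = a *: br z x + br z y),
      (forall x : V, br x x = 0) &
      (forall x y z : V, br x (br y z) + br y (br z x) + br z (br x y) = 0)].

Definition is_linear_map (V W : vectType F) (f : V -> W) : Prop :=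
  forall (a : F) (x y : V), f (a *: x + y) = a *: f x + f y.

Definition lie_hom (V W : vectType F) (brV : V -> V -> V) (brW : W -> W -> W)
  (f : V -> W) : Prop :=
  is_linear_map f /\ forall x y, f (brV x y) = brW (f x) (f y).

Definition lie_iso (V W : vectType F) (brV : V -> V -> V) (brW : W -> W -> W)
  (f : V -> W) : Prop := lie_hom brV brW f /\ bijective f.

Variables (L : vectType F) (br : L -> L -> L).

Definition subalg (U : {vspace L}) : Prop :=
  forall x y, x \in U -> y \in U -> br x y \in U.

Definition ideal (I : {vspace L}) : Prop :=
  forall x y, y \in I -> br x y \in I.

Definition max_subalg (U : {vspace L}) : Prop :=
  [/\ subalg U, U != fullv%VS &
      forall V : {vspace L}, subalg V -> (U <= V)%VS -> V = U \/ V = fullv%VS].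

Definition is_core (U C : {vspace L}) : Prop :=
  [/\ ideal C, (C <= U)%VS &
      forall I : {vspace L}, ideal I -> (I <= U)%VS -> (I <= C)%VS].

Definition primitive : Prop :=
  exists U : {vspace L}, max_subalg U /\ is_core U 0%VS.

Definition min_ideal (B : {vspace L}) : Prop :=
  [/\ ideal B, B != 0%VS &
      forall I : {vspace L}, ideal I -> (I <= B)%VS -> I = 0%VS \/ I = B].

Definition abelian_sub (B : {vspace L}) : Prop :=
  forall x y, x \in B -> y \in B -> br x y = 0.

Definition prim_type1 : Prop :=
  primitive /\ exists B, [/\ min_ideal B, abelian_sub B &
                            forall B', min_ideal B' -> B' = B].

Definition prim_type2 : Prop :=
  primitive /\ exists B, [/\ min_ideal B, ~ abelian_sub B &
                            forall B', min_ideal B' -> B' = B].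

Definition prim_type3 : Prop :=
  primitive /\ exists B1 B2,
    [/\ B1 <> B2, min_ideal B1 /\ min_ideal B2,
        ~ abelian_sub B1, ~ abelian_sub B2 &
        forall B', min_ideal B' -> B' = B1 \/ B' = B2].

Definition is_centralizer (B C : {vspace L}) : Prop :=
  forall x, x \in C <-> (forall b, b \in B -> br x b = 0).

Definition complements (U A : {vspace L}) : Prop :=
  (A + U)%VS = fullv%VS /\ (A :&: U)%VS = 0%VS.

(* Bracket of the semidirect sum  B |x Q  on  subvs_of B * Q, where Q acts on B
   via act, and B carries the bracket of L restricted to B. *)
Definition sd_bracket (B : {vspace L}) (Q : vectType F) (brQ : Q -> Q -> Q)
  (act : Q -> subvs_of B -> subvs_of B) (u v : subvs_of B * Q) : subvs_of B * Q :=
  (vsproj B (br (vsval u.1) (vsval v.1)) + act u.2 v.1 - act v.2 u.1,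
   brQ u.2 v.2).

(* The quotient L/C_L(B) is given (up to
   isomorphism) as a Lie algebra Q with a surjective Lie homomorphism
   pi : L -> Q whose kernel is C_L(B); Q acts on B by the induced adjoint
   action  pi(x) . b = [x, b]. *)
Definition iso_semidirect_quot (B : {vspace L}) : Prop :=
  exists (C : {vspace L}) (Q : vectType F) (brQ : Q -> Q -> Q) (pi : L -> Q)
         (act : Q -> subvs_of B -> subvs_of B) (phi : L -> subvs_of B * Q),
    [/\ is_centralizer B C, is_lie brQ /\ lie_hom br brQ pi,
        (forall q : Q, exists x, pi x = q) /\ (forall x, pi x = 0 <-> x \in C),
        (forall x (b : subvs_of B), vsval (act (pi x) b) = br x (vsval b)) &
        lie_iso br (sd_bracket brQ act) phi].

End LieDefs.

From HB Require Import structures.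
From mathcomp Require Import all_boot all_order all_algebra.
From mathcomp Require Import zify.
Set Implicit Arguments. Unset Strict Implicit. Unset Printing Implicit Defensive.
Import GRing.Theory.
Local Open Scope ring_scope.

(* If [U] complements both a minimal ideal [B] and [C = C_L(B)], then [U] is a
   maximal subalgebra with zero core: a larger subalgebra meets [B] in a nonzero
   ideal, and an ideal [I] inside [U] centralizes [B] since [[I, B] <= B :&: U].
   Conversely, if [U] is maximal with zero core then [I + U = L] for every
   nonzero ideal [I]; when [B] and [C] are both nonzero (in type 1 [B <= C], in
   type 3 the other minimal ideal lies in [C]) each meets [U] in an ideal, hence
   trivially.  As [B] and [C] then have equal dimension, an abelian [B] equals
   [C] (type 1), while otherwise [C] is a second, nonabelian minimal ideal
   (type 3).  Finally, a common complement [U] is a copy of [L/C] and makes [L]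
   the semidirect sum of [B] and [U]; conversely, the preimages of [B x 0] and
   [0 x L/C] under such an isomorphism are the required [B] and [U]. *)

Section LinearMaps.
Variables (F : fieldType) (V W : vectType F).
Implicit Types (f : V -> W) (U : {vspace V}).

Definition linear_of f (lin_f : is_linear_map f) : {linear V -> W} :=
  HB.pack f (GRing.isLinear.Build F V W *:%R f lin_f).

Lemma linear_map0 f : is_linear_map f -> f 0 = 0.
Proof.
move=> lin_f; have := lin_f 1 0 0; rewrite !scale1r addr0 => f00.
by apply/(addrI (f 0)); rewrite addr0 -f00.
Qed.

Lemma linear_mapD f x y : is_linear_map f -> f (x + y) = f x + f y.
Proof. by move=> lin_f; have := lin_f 1 x y; rewrite !scale1r. Qed.

Lemma linear_map_kernel f : is_linear_map f ->
  {K : {vspace V} | forall x, (x \in K) = (f x == 0)}.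
Proof.
move=> lin_f; exists (lker (linfun (linear_of lin_f))) => x.
by rewrite memv_ker lfunE.
Qed.

Lemma linear_map_image f U : is_linear_map f ->
  exists I : {vspace W}, forall y, y \in I <-> exists2 x, x \in U & y = f x.
Proof.
move=> lin_f; exists (linfun (linear_of lin_f) @: U)%VS => y; split.
  by case/memv_imgP=> x Ux ->; exists x; rewrite ?lfunE.
by case=> x Ux ->; rewrite -[f x](lfunE (linear_of lin_f)) memv_img.
Qed.

End LinearMaps.

Section DirectSum.
Variables (F : fieldType) (L : vectType F).

Lemma daddv_pi_addr (X Y : {vspace L}) a y : (X :&: Y)%VS = 0%VS ->
  a \in X -> y \in Y -> daddv_pi X Y (a + y) = a.
Proof.
move=> XY aX yY; rewrite linearD /= daddv_pi_id //.
have YX : (Y :&: X = 0)%VS by rewrite capvC.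
have := @daddv_pi_add _ _ X Y y XY (subvP (addvSr X Y) _ yY).
rewrite [daddv_pi Y X y]daddv_pi_id // => /eqP.
by rewrite -subr_eq0 addrK => /eqP ->; rewrite addr0.
Qed.

Definition proj_along (U A : {vspace L}) (x : L) : subvs_of U :=
  vsproj U (daddv_pi U A x).

Lemma proj_alongE U A x : vsval (proj_along U A x) = daddv_pi U A x.
Proof. by rewrite vsprojK ?memv_pi. Qed.

Variables U A : {vspace L}.
Hypothesis UA : complements U A.

Lemma complements_dim : (\dim A + \dim U = \dim {:L})%N.
Proof. by case: UA => sUA cUA; rewrite -dimv_sum_cap sUA cUA dimv0 addn0. Qed.

Lemma complements_pi_add x : daddv_pi A U x + daddv_pi U A x = x.
Proof. by case: UA => sUA cUA; rewrite daddv_pi_add // sUA memvf. Qed.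

Lemma complements_capC : (U :&: A)%VS = 0%VS.
Proof. by case: UA => _; rewrite capvC. Qed.

Lemma proj_along_surj q : exists x, proj_along U A x = q.
Proof.
exists (vsval q); apply: subvs_inj.
by rewrite proj_alongE daddv_pi_id ?complements_capC ?subvsP.
Qed.

Lemma proj_along_eq0 x : proj_along U A x = 0 <-> x \in A.
Proof.
split=> [/(congr1 vsval) | xA].
  rewrite proj_alongE linear0 -{2}(complements_pi_add x) => ->.
  by rewrite addr0 memv_pi.
apply: subvs_inj; rewrite proj_alongE linear0 -[x]add0r.
by rewrite daddv_pi_addr ?complements_capC ?mem0v.
Qed.

End DirectSum.

Section LieAlgebra.
Variables (F : fieldType) (L : vectType F) (br : L -> L -> L).
Hypothesis HL : is_lie br.
Implicit Types (x y z : L) (A B C I J U : {vspace L}).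

Lemma br_linl z : is_linear_map (br^~ z).
Proof. by case: HL => brl _ _ _ a x y; apply: brl. Qed.

Lemma br_linr z : is_linear_map (br z).
Proof. by case: HL => _ brr _ _ a x y; apply: brr. Qed.

Lemma brDl x y z : br (x + y) z = br x z + br y z.
Proof. exact: (linear_mapD _ _ (br_linl z)). Qed.

Lemma brDr x y z : br z (x + y) = br z x + br z y.
Proof. exact: linear_mapD (br_linr z). Qed.

Lemma br0l z : br 0 z = 0.
Proof. exact: (linear_map0 (br_linl z)). Qed.

Lemma br0r z : br z 0 = 0.
Proof. exact: linear_map0 (br_linr z). Qed.

Lemma brxx x : br x x = 0.
Proof. by case: HL. Qed.

Lemma jacobi x y z : br x (br y z) + br y (br z x) + br z (br x y) = 0.
Proof. by case: HL. Qed.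

Lemma brC x y : br x y = - br y x.
Proof.
have := brxx (x + y); rewrite brDl !brDr !brxx add0r addr0 => /eqP.
by rewrite addr_eq0 => /eqP.
Qed.

Lemma brC_eq0 x y : br x y = 0 -> br y x = 0.
Proof. by rewrite brC => /eqP; rewrite oppr_eq0 => /eqP. Qed.

Lemma ideal_brl I x y : ideal br I -> x \in I -> br x y \in I.
Proof. by move=> idI xI; rewrite brC memvN; apply: idI. Qed.

Lemma ideal_cap I J : ideal br I -> ideal br J -> ideal br (I :&: J).
Proof. by move=> idI idJ x y /memv_capP[yI yJ]; rewrite memv_cap idI ?idJ. Qed.

Lemma subalg_ideal_add I U : ideal br I -> subalg br U -> subalg br (I + U).
Proof.
move=> idI sU x y /memv_addP[i iI [u uU ->]] /memv_addP[j jI [v vU ->]].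
rewrite brDl !brDr !addrA; apply: memv_add; last exact: sU.
by apply: memvD; [apply: memvD; [apply: idI | apply: ideal_brl] | apply: idI].
Qed.

Lemma min_ideal_cap0 I J : min_ideal br I -> min_ideal br J -> I <> J ->
  (I :&: J)%VS = 0%VS.
Proof.
case=> idI nI minI [idJ _ minJ] neIJ.
case: (minI _ (ideal_cap idI idJ) (capvSl I J)) => // IJ.
case: (minJ I idI); [by rewrite -IJ capvSr | move=> I0 | by []].
by rewrite I0 eqxx in nI.
Qed.

Lemma centralizer_exists B : exists C, is_centralizer br B C.
Proof.
pose K i := sval (linear_map_kernel (br_linl (vbasis B)`_i)).
have KP i x : x \in K i = (br x (vbasis B)`_i == 0).
  by rewrite /K; case: linear_map_kernel.
exists (\bigcap_(i < \dim B) K i)%VS => x; split.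
  rewrite memvE => /subv_bigcapP cent_x b bB.
  rewrite (coord_vbasis bB) -[br x _]/(linear_of (br_linr x) _) linear_sum.
  apply: big1 => i _.
  have := cent_x i isT; rewrite -memvE KP => /eqP bx0.
  by rewrite linearZ /= bx0 scaler0.
move=> cent_x; rewrite memvE; apply/subv_bigcapP => i _; rewrite -memvE KP.
by apply/eqP/cent_x/vbasis_mem/mem_nth; rewrite size_tuple.
Qed.

Lemma centralizer_ideal B C : ideal br B -> is_centralizer br B C -> ideal br C.
Proof.
move=> idB cenC x c /cenC cent_c; apply/cenC => b bB; apply: brC_eq0.
have := jacobi b x c.
by rewrite (cent_c b bB) br0r addr0 (cent_c _ (ideal_brl x idB bB)) addr0.
Qed.

Lemma abelian_sub_centralizer B C : is_centralizer br B C ->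
  abelian_sub br B <-> (B <= C)%VS.
Proof.
move=> cenC; split=> [abB | /subvP sBC x y xB yB].
  by apply/subvP => x xB; apply/cenC => b bB; apply: abB.
exact: (cenC x).1 (sBC x xB) y yB.
Qed.

Lemma ideal_cap0_sub_centralizer I B C : ideal br I -> ideal br B ->
  (I :&: B)%VS = 0%VS -> is_centralizer br B C -> (I <= C)%VS.
Proof.
move=> idI idB IB cenC; apply/subvP => x xI; apply/cenC => b bB.
have : br x b \in (I :&: B)%VS by rewrite memv_cap idB // ideal_brl.
by rewrite IB memv0 => /eqP.
Qed.

Section ZeroCore.
Variable U : {vspace L}.
Hypotheses (maxU : max_subalg br U) (core0 : is_core br U 0).

Lemma core0_ideal_eq0 I : ideal br I -> (I <= U)%VS -> I = 0%VS.
Proof. by case: core0 => _ _ coreP idI sIU; apply/eqP; rewrite -subv0 coreP. Qed.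

Lemma core0_ideal_add I : ideal br I -> I != 0%VS -> (I + U)%VS = fullv.
Proof.
case: maxU => sU _ maxP idI nI.
case: (maxP _ (subalg_ideal_add idI sU) (addvSr I U)) => // IU.
by case/eqP: nI; apply: core0_ideal_eq0 => //; rewrite -IU addvSl.
Qed.

Lemma core0_ideal_dim I : ideal br I -> I != 0%VS ->
  (\dim {:L} <= \dim I + \dim U)%N.
Proof. by move=> idI nI; rewrite -dimv_sum_cap core0_ideal_add ?leq_addr. Qed.

(* [I :&: U] is an ideal: writing [x = j + u] with [j \in J], the [j] part
   kills [I] and the [u] part preserves both [I] and [U]. *)
Lemma core0_complements I J : ideal br I -> ideal br J -> I != 0%VS ->
  J != 0%VS -> (forall x y, x \in J -> y \in I -> br x y = 0) ->
  complements U I.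
Proof.
move=> idI idJ nI nJ cJI; split; first exact: core0_ideal_add.
apply: core0_ideal_eq0; last exact: capvSr.
move=> x y /memv_capP[yI yU].
have := memvf x; rewrite -(core0_ideal_add idJ nJ) => /memv_addP[j jJ [u uU ->]].
rewrite brDl cJI // add0r memv_cap idI //=.
by case: maxU => sU _ _; apply: sU.
Qed.

End ZeroCore.

Definition sub_br U (p q : subvs_of U) : subvs_of U :=
  vsproj U (br (vsval p) (vsval q)).

Definition sub_act B U (q : subvs_of U) (b : subvs_of B) : subvs_of B :=
  vsproj B (br (vsval q) (vsval b)).

Lemma sub_brE U (p q : subvs_of U) :
  subalg br U -> vsval (sub_br p q) = br (vsval p) (vsval q).
Proof. by move=> sU; rewrite vsprojK // sU ?subvsP. Qed.

Lemma subalg_is_lie U : subalg br U -> is_lie (@sub_br U).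
Proof.
move=> sU; split=> [a p q r | a p q r | p | p q r].
- by rewrite /sub_br !linearP /= br_linl linearP.
- by rewrite /sub_br !linearP /= br_linr linearP.
- by rewrite /sub_br brxx linear0.
- by apply: subvs_inj; rewrite !linearD /= !sub_brE // jacobi.
Qed.

Lemma proj_along_lie_hom U A : subalg br U -> ideal br A -> complements U A ->
  lie_hom br (@sub_br U) (proj_along U A).
Proof.
move=> sU idA UA; split=> [a x y | x y]; first by rewrite /proj_along !linearP.
apply: subvs_inj; rewrite sub_brE // !proj_alongE.
set pU := daddv_pi U A; set pA := daddv_pi A U.
have eUA z : z = pU z + pA z by rewrite addrC complements_pi_add.
rewrite {1}(eUA x) {1}(eUA y) brDl !brDr -addrA daddv_pi_addr ?complements_capC //.
  by apply: sU; apply: memv_pi.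
by apply: memvD; [apply: idA | apply: memvD; [apply: ideal_brl | apply: idA]];
  rewrite ?memv_pi.
Qed.

Lemma semidirect_lie_iso B U : ideal br B -> subalg br U -> complements U B ->
  lie_iso br (sd_bracket br (@sub_br U) (@sub_act B U))
    (fun x => (proj_along B U x, proj_along U B x)).
Proof.
move=> idB sU UB; have [_ BU] := UB; have UB0 := complements_capC UB.
set qB := daddv_pi B U; set qU := daddv_pi U B.
have eBU x : x = qB x + qU x by rewrite complements_pi_add.
split; last first.
  exists (fun p => vsval p.1 + vsval p.2) => [x | [b u]] /=.
    by rewrite !proj_alongE -eBU.
  congr pair; apply: subvs_inj; rewrite proj_alongE.
    by rewrite daddv_pi_addr ?subvsP.
  by rewrite addrC daddv_pi_addr ?subvsP.
split=> [a x y | x y]; first by rewrite /proj_along !linearP.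
have brE : br x y = (br (qB x) (qB y) + br (qU x) (qB y) - br (qU y) (qB x))
                    + br (qU x) (qU y).
  by rewrite {1}(eBU x) {1}(eBU y) brDl !brDr (brC (qB x) (qU y)) addrACA addrA.
have brB : br (qB x) (qB y) + br (qU x) (qB y) - br (qU y) (qB x) \in B.
  by apply: memvB; [apply: memvD|]; apply: idB; apply: memv_pi.
have brU : br (qU x) (qU y) \in U by apply: sU; apply: memv_pi.
rewrite /sd_bracket /sub_act /= !proj_alongE; congr pair.
  by rewrite /proj_along -!linearD -linearB brE daddv_pi_addr.
by apply: subvs_inj; rewrite sub_brE // !proj_alongE brE addrC daddv_pi_addr.
Qed.

Definition bicomplement B U C :=
  [/\ min_ideal br B, subalg br U, is_centralizer br B C,
      complements U B & complements U C].

Lemma type13_min_ideal_centralizer_neq0 : prim_type1 br \/ prim_type3 br ->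
  exists2 B, min_ideal br B & forall C, is_centralizer br B C -> C != 0%VS.
Proof.
case=> [[_ [B [minB abB _]]] | [_ [B1 [B2 [neB [minB1 minB2] _ _ _]]]]].
  exists B => // C cenC; have [_ nB _] := minB.
  move/(abelian_sub_centralizer cenC): abB => sBC.
  by apply: contraNneq nB => C0; rewrite -subv0 -C0.
exists B1 => // C cenC; have [idB1 _ _] := minB1; have [idB2 nB2 _] := minB2.
have sB2C : (B2 <= C)%VS.
  apply: ideal_cap0_sub_centralizer idB2 idB1 _ cenC.
  exact: min_ideal_cap0 minB2 minB1 (nesym neB).
by apply: contraNneq nB2 => C0; rewrite -subv0 -C0.
Qed.

Lemma type13_bicomplement : prim_type1 br \/ prim_type3 br ->
  exists B U C, bicomplement B U C.
Proof.
move=> type13; have [B minB nzC] := type13_min_ideal_centralizer_neq0 type13.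
have [U [maxU core0]] : primitive br by case: type13 => -[].
have [C cenC] := centralizer_exists B; have [idB nB _] := minB.
have idC := centralizer_ideal idB cenC.
have cent_CB x y : x \in C -> y \in B -> br x y = 0 by move=> /cenC; apply.
have cent_BC x y : x \in B -> y \in C -> br x y = 0.
  by move=> xB yC; apply/brC_eq0/cent_CB.
exists B, U, C; split=> //; first by case: maxU.
  exact: (core0_complements maxU core0 idB idC nB (nzC C cenC) cent_CB).
exact: (core0_complements maxU core0 idC idB (nzC C cenC) nB cent_BC).
Qed.

Section Bicomplement.
Variables B U C : {vspace L}.
Hypotheses (minB : min_ideal br B) (subalgU : subalg br U)
  (cenC : is_centralizer br B C) (UB : complements U B) (UC : complements U C).

Let idB : ideal br B. Proof. by case: minB. Qed.
Let idC : ideal br C. Proof. exact: centralizer_ideal idB cenC. Qed.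

Lemma bicomplement_dim : \dim B = \dim C.
Proof. by have := complements_dim UB; rewrite -(complements_dim UC) => /addIn. Qed.

Lemma bicomplement_core0 : is_core br U 0.
Proof.
split=> [x y|| I idI sIU]; rewrite ?sub0v //.
  by rewrite !memv0 => /eqP->; rewrite br0r.
apply/subvP => x xI; have [_ <-] := UC; rewrite memv_cap (subvP sIU) // andbT.
apply/cenC => b bB; have [_ BU] := UB.
have : br x b \in (B :&: U)%VS by rewrite memv_cap idB // (subvP sIU) // ideal_brl.
by rewrite BU memv0 => /eqP.
Qed.

(* A subalgebra [V] properly containing [U] meets [B] nontrivially for
   dimension reasons, and [V :&: B] is an ideal since [L = C + U]. *)
Lemma bicomplement_max_subalg : max_subalg br U.
Proof.
have [_ nB minP] := minB; have [sBU _] := UB; have dimU := complements_dim UB.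
split=> // [|V sV sUV].
  apply: contraNneq nB => U_full; rewrite -dimv_eq0.
  by move: dimU; rewrite U_full; lia.
have [->|neVU] := eqVneq V U; [by left | right].
have ltUV : (\dim U < \dim V)%N by move: neVU; rewrite eq_sym eqEdim sUV ltnNge.
have idVB : ideal br (V :&: B).
  move=> x y /memv_capP[yV yB]; have [sCU _] := UC.
  have := memvf x; rewrite -sCU => /memv_addP[c cC [u uU ->]].
  by rewrite brDl (cenC c).1 // add0r memv_cap idB // sV // (subvP sUV).
have nVB : (V :&: B)%VS != 0%VS.
  rewrite -dimv_eq0 -lt0n; have := dimv_sum_cap V B.
  have := dimvS (subvf (V + B)); lia.
case: (minP _ idVB (capvSr V B)) => [VB0|VB]; first by rewrite VB0 eqxx in nVB.
by apply/eqP; rewrite eqEsubv subvf -sBU subv_add sUV andbT -VB capvSl.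
Qed.

Lemma bicomplement_primitive : primitive br.
Proof.
by exists U; split; [apply: bicomplement_max_subalg | apply: bicomplement_core0].
Qed.

Lemma bicomplement_centralizer_min_ideal : min_ideal br C.
Proof.
have nC : C != 0%VS.
  by have [_ nB _] := minB; rewrite -dimv_eq0 -bicomplement_dim dimv_eq0.
split=> // I idI sIC; have [->|nI] := eqVneq I 0%VS; [by left | right].
apply/eqP; rewrite eqEdim sIC /=.
have := core0_ideal_dim bicomplement_max_subalg bicomplement_core0 idI nI.
by have := complements_dim UC; lia.
Qed.

Lemma bicomplement_abelian_type1 : abelian_sub br B -> prim_type1 br.
Proof.
move=> abB; split; first exact: bicomplement_primitive.
have sBC := (abelian_sub_centralizer cenC).1 abB.
have BC : B = C by apply/eqP; rewrite eqEdim sBC bicomplement_dim /=.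
exists B; split=> // B' minB'; have [idB' nB' _] := minB'.
have [//|/eqP neB'B] := eqVneq B' B.
have B'B := min_ideal_cap0 minB' minB neB'B.
have := ideal_cap0_sub_centralizer idB' idB B'B cenC; rewrite -BC => sB'B.
by move: nB'; rewrite -subv0 -B'B subv_cap subvv sB'B.
Qed.

(* If [C] were abelian, [C] would lie in its own centralizer, which is again a
   complement of [U] by [core0_complements], hence equal to [C]; but [B]
   centralizes [C], so [B] would lie in [C], contradicting [B :&: C = 0]. *)
Lemma bicomplement_nonabelian_type3 : ~ abelian_sub br B -> prim_type3 br.
Proof.
move=> nabB; split; first exact: bicomplement_primitive.
have minC := bicomplement_centralizer_min_ideal.
have [_ nB _] := minB; have [_ nC minCP] := minC.
have neBC : B <> C.
  by move=> BC; apply/nabB/(abelian_sub_centralizer cenC); rewrite BC.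
have BC := min_ideal_cap0 minB minC neBC.
exists B, C; split=> // [abC | B' minB'].
  have [C' cenC'] := centralizer_exists C.
  have sCC' := (abelian_sub_centralizer cenC').1 abC.
  have nC' : C' != 0%VS by apply: contraNneq nC => C'0; rewrite -subv0 -C'0.
  have cent_CC' x y : x \in C -> y \in C' -> br x y = 0.
    by move=> xC /cenC'/(_ x xC)/brC_eq0.
  have UC' := core0_complements bicomplement_max_subalg bicomplement_core0
                (centralizer_ideal idC cenC') idC nC' nC cent_CC'.
  have CC' : C = C'.
    apply/eqP; rewrite eqEdim sCC' /=.
    by have := complements_dim UC; have := complements_dim UC'; lia.
  have sBC : (B <= C)%VS.
    by apply/subvP => b bB; rewrite CC'; apply/cenC' => c /cenC/(_ b bB)/brC_eq0.
  by move: nB; rewrite -subv0 -BC subv_cap subvv sBC.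
have [->|/eqP neB'B] := eqVneq B' B; [by left | right]; have [idB' nB' _] := minB'.
have B'B := min_ideal_cap0 minB' minB neB'B.
have sB'C := ideal_cap0_sub_centralizer idB' idB B'B cenC.
by case: (minCP B' idB' sB'C) => // B'0; rewrite B'0 eqxx in nB'.
Qed.

Lemma bicomplement_type13 : prim_type1 br \/ prim_type3 br.
Proof.
have [sBC|nsBC] := boolP (B <= C)%VS.
  by left; apply/bicomplement_abelian_type1/(abelian_sub_centralizer cenC).
right; apply: bicomplement_nonabelian_type3.
by move/(abelian_sub_centralizer cenC); apply/negP.
Qed.

Lemma bicomplement_iso_semidirect : iso_semidirect_quot br B.
Proof.
exists C, (subvs_of U), (@sub_br U), (proj_along U C), (@sub_act B U),
  (fun x => (proj_along B U x, proj_along U B x)); split=> //.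
- split; [exact: subalg_is_lie | exact: proj_along_lie_hom].
- split; [exact: proj_along_surj | exact: proj_along_eq0].
- move=> x b; rewrite /sub_act proj_alongE.
  have -> : br x (vsval b) = br (daddv_pi U C x) (vsval b).
    rewrite -{1}(complements_pi_add UC x) brDl (cenC _).1 ?memv_pi ?subvsP //.
    by rewrite add0r.
  by rewrite vsprojK // idB ?subvsP.
- exact: semidirect_lie_iso.
Qed.

End Bicomplement.

Section SemidirectPullback.
Variables (B C : {vspace L}) (Q : vectType F) (brQ : Q -> Q -> Q) (pi : L -> Q)
  (act : Q -> subvs_of B -> subvs_of B) (phi : L -> subvs_of B * Q).
Hypotheses (minB : min_ideal br B) (cenC : is_centralizer br B C)
  (lieQ : is_lie brQ) (hom_pi : lie_hom br brQ pi)
  (pi_surj : forall q, exists x, pi x = q) (pi_eq0 : forall x, pi x = 0 <-> x \in C)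
  (actE : forall x b, vsval (act (pi x) b) = br x (vsval b))
  (iso_phi : lie_iso br (sd_bracket br brQ act) phi).

Let idB : ideal br B. Proof. by case: minB. Qed.

Let lin_phi : is_linear_map phi. Proof. by case: iso_phi => -[]. Qed.

Let phi_br x y : phi (br x y) = sd_bracket br brQ act (phi x) (phi y).
Proof. by case: iso_phi => -[]. Qed.

Let phi_inj : injective phi.
Proof. by case: iso_phi => _ [psi phiK _]; apply: can_inj phiK. Qed.

Let phi_surj p : exists x, phi x = p.
Proof. by case: iso_phi => _ [psi _ psiK]; exists (psi p). Qed.

Let phi0 : phi 0 = 0. Proof. exact: linear_map0 lin_phi. Qed.

Let act0l b : act 0 b = 0.
Proof.
have pi0 : pi 0 = 0 by case: hom_pi => /linear_map0.
by apply: subvs_inj; rewrite -pi0 actE br0l linear0.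
Qed.

Let act0r q : act q 0 = 0.
Proof.
by have [z <-] := pi_surj q; apply: subvs_inj; rewrite actE !linear0 br0r.
Qed.

Let brQ0 q : brQ q 0 = 0.
Proof. by case: lieQ => _ linQ _ _; apply: linear_map0 => a x y; apply: linQ. Qed.

Let phi_br_pullback x y : (phi y).2 = 0 -> phi (br x y) =
  (vsproj B (br (vsval (phi x).1) (vsval (phi y).1)) + act (phi x).2 (phi y).1, 0).
Proof. by move=> y2; rewrite phi_br /sd_bracket y2 act0l subr0 brQ0. Qed.

Section Pullbacks.
Variables B' U' C' : {vspace L}.
Hypotheses (B'E : forall x, (x \in B') = ((phi x).2 == 0))
  (U'E : forall x, (x \in U') = ((phi x).1 == 0))
  (cenC' : is_centralizer br B' C').

Lemma pullback_ideal : ideal br B'.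
Proof. by move=> x y; rewrite !B'E => /eqP y2; rewrite phi_br_pullback. Qed.

Lemma pullback_subalg : subalg br U'.
Proof.
move=> x y; rewrite !U'E phi_br => /eqP x1 /eqP y1.
by rewrite /sd_bracket /= x1 y1 !act0r linear0 br0l linear0 !addr0 subr0.
Qed.

Lemma pullback_complements : complements U' B'.
Proof.
split.
  apply/eqP; rewrite eqEsubv subvf; apply/subvP => x _.
  have [xB xBE] := phi_surj ((phi x).1, 0).
  have [xU xUE] := phi_surj (0, (phi x).2).
  have -> : x = xB + xU.
    apply: phi_inj; rewrite linear_mapD // xBE xUE.
    by apply: injective_projections; rewrite /= ?addr0 ?add0r.
  by rewrite memv_add ?B'E ?U'E ?xBE ?xUE.
apply/eqP; rewrite -subv0; apply/subvP => x /memv_capP[].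
rewrite B'E U'E memv0 => /eqP x2 /eqP x1; apply/eqP/phi_inj.
by rewrite phi0; case: (phi x) x1 x2 => b q /= -> ->.
Qed.

Lemma pullback_first_inj x y :
  x \in B' -> y \in B' -> (phi x).1 = (phi y).1 -> x = y.
Proof.
rewrite !B'E => /eqP x2 /eqP y2 xy1; apply: phi_inj.
by apply: injective_projections; rewrite ?x2 ?y2.
Qed.

Lemma pullback_neq0 : B' != 0%VS.
Proof.
have [_ nB _] := minB; apply: contraNneq nB => B'0.
have [x xE] := phi_surj (vsproj B (vpick B), 0).
have : x \in B' by rewrite B'E xE.
rewrite B'0 memv0 => /eqP x0; move: xE; rewrite x0 phi0 => -[].
by move/(congr1 vsval); rewrite vsprojK ?memv_pick // linear0 -vpick0 => ->.
Qed.

(* The first coordinates of an ideal [I <= B'] form an ideal of [L] inside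
   [B], because [phi] is onto and [pi x] acts on [B] as [ad x]. *)
Lemma pullback_min_ideal : min_ideal br B'.
Proof.
split; [exact: pullback_ideal | exact: pullback_neq0 | move=> I idI sIB'].
have [_ _ minP] := minB.
have lin1 : is_linear_map (fun x => vsval (phi x).1).
  by move=> a x y; rewrite lin_phi.
have [J JE] := linear_map_image I lin1.
have idJ : ideal br J.
  move=> z _ /JE[x xI ->]; have [w wE] := phi_surj (0, pi z).
  apply/JE; exists (br w x); first exact: idI.
  rewrite phi_br_pullback; last by apply/eqP; rewrite -B'E (subvP sIB').
  by rewrite wE /= br0l !linear0 add0r actE.
have sJB : (J <= B)%VS by apply/subvP => y /JE[x _ ->]; apply: subvsP.
case: (minP J idJ sJB) => JB; [left | right].
  apply/eqP; rewrite -subv0; apply/subvP => x xI; rewrite memv0; apply/eqP.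
  have : vsval (phi x).1 \in J by apply/JE; exists x.
  rewrite JB memv0 => /eqP x1.
  apply: pullback_first_inj (subvP sIB' x xI) (mem0v _) _.
  by apply: subvs_inj; rewrite x1 phi0 linear0.
apply/eqP; rewrite eqEsubv sIB'; apply/subvP => y yB'.
have : vsval (phi y).1 \in J by rewrite JB subvsP.
case/JE => x xI yx; suff -> : y = x by [].
exact: pullback_first_inj yB' (subvP sIB' x xI) (val_inj yx).
Qed.

Lemma pullback_centralizer_mem x z :
  vsval (phi x).1 + z \in C -> (phi x).2 = pi z -> x \in C'.
Proof.
move=> x1zC x2E; apply/cenC' => y; rewrite B'E => /eqP y2; apply: phi_inj.
rewrite phi_br_pullback // phi0 x2E; congr pair; apply: subvs_inj.
rewrite linearD /= vsprojK ?actE; last by apply: idB; apply: subvsP.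
by rewrite -brDl (cenC _).1 ?subvsP // linear0.
Qed.

Lemma pullback_centralizer_complements : complements U' C'.
Proof.
split.
  apply/eqP; rewrite eqEsubv subvf; apply/subvP => x _.
  set z := - vsval (phi x).1.
  have [xC xCE] := phi_surj ((phi x).1, pi z).
  have [xU xUE] := phi_surj (0, (phi x).2 - pi z).
  have -> : x = xC + xU.
    apply: phi_inj; rewrite linear_mapD // xCE xUE.
    by apply: injective_projections; rewrite /= ?addr0 // addrC subrK.
  apply: memv_add; last by rewrite U'E xUE.
  by apply: (pullback_centralizer_mem (z := z)); rewrite xCE //= subrr mem0v.
apply/eqP; rewrite -subv0; apply/subvP => x /memv_capP[xC'].
rewrite U'E memv0 => /eqP x1.
have [z zE] := pi_surj (phi x).2.
have zC : z \in C.
  apply/cenC => b bB; have [y yE] := phi_surj (vsproj B b, 0).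
  have := (cenC' x).1 xC' y; rewrite B'E yE => /(_ (eqxx _))/(congr1 phi).
  rewrite phi_br_pullback yE // x1 phi0 -zE => /(congr1 (fun p => vsval p.1)) /=.
  by rewrite br0l !linear0 add0r actE vsprojK.
have x2 : (phi x).2 = 0 by rewrite -zE; apply/pi_eq0.
by apply/eqP/phi_inj; rewrite phi0; apply: injective_projections.
Qed.
End Pullbacks.

Lemma iso_semidirect_bicomplement : exists B U C, bicomplement B U C.
Proof.
have lin1 : is_linear_map (fun x => (phi x).1) by move=> a x y; rewrite lin_phi.
have lin2 : is_linear_map (fun x => (phi x).2) by move=> a x y; rewrite lin_phi.
have [B' B'E] := linear_map_kernel lin2; have [U' U'E] := linear_map_kernel lin1.
have [C' cenC'] := centralizer_exists B'.
exists B', U', C'; split.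
- exact: pullback_min_ideal.
- exact: pullback_subalg.
- exact: cenC'.
- exact: pullback_complements.
- exact: pullback_centralizer_complements.
Qed.

End SemidirectPullback.

End LieAlgebra.

Theorem theorem1p6 (F : fieldType) (L : vectType F) (br : L -> L -> L)
  (HL : is_lie br) :
  let c1 := prim_type1 br \/ prim_type3 br in
  let c2 := exists (B U C : {vspace L}),
      [/\ min_ideal br B, subalg br U, is_centralizer br B C,
          complements U B & complements U C] in
  let c3 := exists B : {vspace L}, min_ideal br B /\ iso_semidirect_quot br B in
  [/\ c1 <-> c2, c2 <-> c3 & c1 <-> c3].
Proof.
move=> c1 c2 c3.
have c12 : c1 <-> c2.
  split; first exact: type13_bicomplement.
  case=> B [U [C [minB sU cenC UB UC]]].
  exact: bicomplement_type13 minB sU cenC UB UC.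
have c23 : c2 <-> c3.
  split=> [[B [U [C [minB sU cenC UB UC]]]] | [B [minB iso]]].
    by exists B; split; last apply: bicomplement_iso_semidirect minB sU cenC UB UC.
  have [C [Q [brQ [pi [act [phi [cenC [lieQ hpi] [surj ker] actE isoL]]]]]]] := iso.
  exact: iso_semidirect_bicomplement minB cenC lieQ hpi surj ker actE isoL.
by split=> //; split=> [/c12/c23 | /c23/c12].
Qed.
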